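(* Let $(\Sigma,\partial\Sigma)$ be a weighted metric graph with boundary. For all $\omega=(f_e\,d't_e)\in\mathcal A^{1,0}(\Sigma,\partial\Sigma)$ and $\eta=(g_e\,d''t_e)\in\mathcal A^{0,1}(\Sigma,\partial\Sigma)$ we have $\int_\Sigma d''\omega=\int_{\partial\Sigma}\omega$ and $\int_\Sigma d'\eta=\int_{\partial\Sigma}\eta$.
   Context: A weighted metric graph with boundary $(\Sigma,\partial\Sigma)$: finite multigraph without loop edges, with for each oriented edge $e$ (tail $e^-$, head $e^+$) a length $\ell(e)>0$, parametrization $t_e\colon[0,\ell(e)]\to e$, $t_e(0)=e^-$, $t_{\bar e}(x)=t_e(\ell(e)-x)$, weight $w(e)=w(\bar e)\in\mathbb Z_{>0}$, boundary $\partial\Sigma\subset V(\Sigma)$. Smooth $(1,0)$-forms $(f_e\,d't_e)$ (resp. $(0,1)$-forms $(g_e\,d''t_e)$): families of smooth functions $f_e$ on edges (smooth meaning $f_e\circ t_e$ smooth on the closed interval) with $f_{\bar e}=-f_e$, such that at each vertex $v\notin\partial\Sigma$: if $v$ has valency 1, $f_e$ vanishes near $v$; if $v$ has valency 2 with outgoing edges $e_1,e_2$, then $w(e_1)^{n+1}\frac{d^nf_{e_1}}{dt_{e_1}^n}(v)=-(-1)^nw(e_2)^{n+1}\frac{d^nf_{e_2}}{dt_{e_2}^n}(v)$ for all $n\ge 0$; if valency $\ge3$, $\sum_{e^-=v}w(e)f_e(v)=0$. Operators: $d''(f_e\,d't_e)=(-\frac{df_e}{dt_e}\,d't_ed''t_e)$,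 $d'(g_e\,d''t_e)=(\frac{dg_e}{dt_e}\,d't_ed''t_e)$, where $\frac{d}{dt_e}$ is derivative of the function composed with $t_e$. Integrals: $\int_\Sigma(f_e\,d't_ed''t_e)=\frac12\sum_{e\text{ oriented}}w(e)\int_0^{\ell(e)}f_e\circ t_e(x)\,dx$; $\int_{\partial\Sigma}(f_e\,d't_e)=\sum_{v\in\partial\Sigma}\sum_{e^-=v}w(e)f_e(v)$; $\int_{\partial\Sigma}(g_e\,d''t_e)=\sum_{v\in\partial\Sigma}\sum_{e^+=v}w(e)g_e(v)$. *)

From Stdlib Require Import Reals.
From Coquelicot Require Import Coquelicot.
From mathcomp Require Import ssreflect ssrbool ssrfun eqtype ssrnat seq choice fintype.

Set Implicit Arguments.
Unset Strict Implicit.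
Unset Printing Implicit Defensive.

Local Open Scope R_scope.

Definition fsumR (T : finType) (P : pred T) (f : T -> R) : R :=
  foldr Rplus 0 (map f (filter P (enum T))).

(* A weighted metric graph with boundary.  Oriented edges form the finite type
   [E]; [rev e] is the reversed edge \bar e; [tail e] = e^-, head e^+ = tail (rev e). *)
Record wmgraph := WMGraph {
  V : finType;
  E : finType;
  tail : E -> V;
  rev : E -> E;
  len : E -> R;
  wt : E -> nat;
  bdry : pred V;
  rev_invol : forall e, rev (rev e) = e;
  no_loop : forall e, tail (rev e) <> tail e;
  len_pos : forall e, 0 < len e;
  len_rev : forall e, len (rev e) = len e;
  wt_pos : forall e, (0 < wt e)%nat;
  wt_rev : forall e, wt (rev e) = wt e
}.

Definition head (G : wmgraph) (e : E G) : V G := tail (rev e).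

Definition valency (G : wmgraph) (v : V G) : nat := #|[pred e : E G | tail e == v]|.

Definition is_derive_within (a b : R) (f : R -> R) (x l : R) : Prop :=
  filterlim (fun y => (f y - f x) / (y - x))
            (within (fun y => a <= y <= b /\ y <> x) (locally x)) (locally l).

(* D 0 is smooth on the closed interval [a,b] with n-th derivative D n
   (derivatives taken within [a,b], i.e. one-sided at the end points). *)
Definition smooth_on_with (a b : R) (D : nat -> R -> R) : Prop :=
  forall n x, a <= x <= b -> is_derive_within a b (D n) x (D (S n) x).

(* A family of functions (f_e), given through f_e o t_e = F e 0 on [0, l(e)]
   together with its derivatives F e n = d^n f_e / d t_e^n, satisfying the
   conditions defining smooth (1,0)-forms (resp. (0,1)-forms, the conditions
   being identical). *)
Definition smooth_form (G : wmgraph) (F : E G -> nat -> R -> R) : Prop :=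
  (forall e, smooth_on_with 0 (len e) (F e)) /\
  (forall e x, 0 <= x <= len e -> F (rev e) 0%nat x = - F e 0%nat (len e - x)) /\
  (forall v : V G, ~~ bdry v ->
     (valency v = 1%nat ->
        forall e, tail e = v ->
          exists eps, 0 < eps /\ forall x, 0 <= x < eps -> x <= len e -> F e 0%nat x = 0) /\
     (valency v = 2%nat ->
        forall e1 e2, tail e1 = v -> tail e2 = v -> e1 <> e2 ->
          forall n : nat,
            (INR (wt e1)) ^ (S n) * F e1 n 0 =
            - ((-1) ^ n * (INR (wt e2)) ^ (S n) * F e2 n 0)) /\
     ((3 <= valency v)%nat ->
        fsumR [pred e : E G | tail e == v] (fun e => INR (wt e) * F e 0%nat 0) = 0)).

(* int_Sigma of the (1,1)-form (h_e d't_e d''t_e), with h_e o t_e = H e. *)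
Definition int_Sigma (G : wmgraph) (H : E G -> R -> R) : R :=
  / 2 * fsumR predT (fun e => INR (wt e) * RInt (H e) 0 (len e)).

(* d''(f_e d't_e) = (- df_e/dt_e d't_e d''t_e) *)
Definition dbar_10 (G : wmgraph) (F : E G -> nat -> R -> R) : E G -> R -> R :=
  fun e x => - F e 1%nat x.

(* d'(g_e d''t_e) = (dg_e/dt_e d't_e d''t_e) *)
Definition d_01 (G : wmgraph) (F : E G -> nat -> R -> R) : E G -> R -> R :=
  fun e x => F e 1%nat x.

(* int_{dSigma} (f_e d't_e) = sum_{v in dSigma} sum_{e^- = v} w(e) f_e(v) *)
Definition int_bdry_10 (G : wmgraph) (F : E G -> nat -> R -> R) : R :=
  fsumR (@bdry G) (fun v => fsumR [pred e : E G | tail e == v]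
                                   (fun e => INR (wt e) * F e 0%nat 0)).

(* int_{dSigma} (g_e d''t_e) = sum_{v in dSigma} sum_{e^+ = v} w(e) g_e(v) *)
Definition int_bdry_01 (G : wmgraph) (F : E G -> nat -> R -> R) : R :=
  fsumR (@bdry G) (fun v => fsumR [pred e : E G | head e == v]
                                   (fun e => INR (wt e) * F e 0%nat (len e))).

(* On each edge the fundamental theorem of calculus, for functions that are
   smooth only up to the end points, turns the integral of d''(f_e d't_e) into
   w(e) (f_e(e^-) - f_e(e^+)).  Since f_{\bar e} = -f_e, summing over oriented
   edges counts every vertex value twice and yields the total outflux
   sum_v sum_{e^- = v} w(e) f_e(v); the conditions defining smooth forms say
   precisely that this outflux vanishes at interior vertices.  The (0,1) case is
   the negative of the (1,0) case, because d' and d'' differ by a sign and heads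
   of edges are tails of reversed edges. *)

From HB Require Import structures.
From Pilot Require Import Defs.
From Stdlib Require Import Reals Lra.
From Coquelicot Require Import Coquelicot.
From mathcomp Require Import ssreflect ssrbool ssrfun eqtype ssrnat seq fintype bigop.
Local Open Scope R_scope.

HB.instance Definition _ := Monoid.isComLaw.Build R 0 Rplus
  (fun x y z => esym (Rplus_assoc x y z)) Rplus_comm Rplus_0_l.

Lemma fsumR_big (T : finType) (P : pred T) (f : T -> R) :
  fsumR P f = \big[Rplus/0]_(i | P i) f i.
Proof. by rewrite /fsumR foldrE big_map big_filter big_enum_cond; apply: eq_bigl. Qed.

Lemma big_Ropp (I : Type) (r : seq I) (P : pred I) (f : I -> R) :
  \big[Rplus/0]_(i <- r | P i) - f i = - \big[Rplus/0]_(i <- r | P i) f i.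
Proof. by rewrite (big_morph Ropp Ropp_plus_distr Ropp_0). Qed.

Lemma ball_Rabs (x d y : R) : ball x d y <-> Rabs (y - x) < d.
Proof. by []. Qed.

Definition continuous_within (a b : R) (f : R -> R) (x : R) : Prop :=
  forall eps, 0 < eps -> exists d, 0 < d /\
    forall y, a <= y <= b -> Rabs (y - x) < d -> Rabs (f y - f x) < eps.

Lemma is_derive_within_bound {a b f x l} : is_derive_within a b f x l ->
  forall eps, 0 < eps -> exists d, 0 < d /\
    forall y, a <= y <= b -> Rabs (y - x) < d ->
      Rabs (f y - f x - l * (y - x)) <= eps * Rabs (y - x).
Proof.
move=> /filterlim_locally Hf eps Heps.
have [[d Hd] Hball] := Hf (mkposreal eps Heps).
exists d; split=> // y Hy Hyx.
have [->|Hne] := Req_dec y x.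
  by rewrite !Rminus_eq_0 Rmult_0_r Rminus_0_r Rabs_R0 Rmult_0_r; lra.
have /ball_Rabs /= Hq := Hball y Hyx (conj Hy Hne).
have -> : f y - f x - l * (y - x) = ((f y - f x) / (y - x) - l) * (y - x)
  by field; lra.
rewrite Rabs_mult; apply: Rmult_le_compat_r; [exact: Rabs_pos | lra].
Qed.

Lemma is_derive_within_continuous {a b f x l} :
  is_derive_within a b f x l -> continuous_within a b f x.
Proof.
move=> /is_derive_within_bound Hf eps Heps.
have [d [Hd Hbound]] := Hf 1 Rlt_0_1.
have HM : 0 < Rabs l + 1 by have := Rabs_pos l; lra.
exists (Rmin d (eps / (Rabs l + 1))); split.
  by apply: Rmin_pos => //; apply: Rdiv_lt_0_compat.
move=> y Hy Hyx.
have Hyd := Rlt_le_trans _ _ _ Hyx (Rmin_l _ _).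
have /(Rlt_div_r _ _ _ HM) Hye := Rlt_le_trans _ _ _ Hyx (Rmin_r _ _).
have := Hbound y Hy Hyd.
have := Rabs_triang (f y - f x - l * (y - x)) (l * (y - x)).
rewrite Rabs_mult (_ : f y - f x - l * (y - x) + l * (y - x) = f y - f x); last by ring.
have := Rabs_pos (y - x); have := Rabs_pos l; nra.
Qed.

Lemma derivable_pt_lim_of_bound g x l :
  (forall eps, 0 < eps -> exists d, 0 < d /\ forall y, Rabs (y - x) < d ->
     Rabs (g y - g x - l * (y - x)) <= eps * Rabs (y - x)) ->
  derivable_pt_lim g x l.
Proof.
move=> Hg eps Heps.
have [d [Hd Hbound]] := Hg (eps / 2) ltac:(lra).
exists (mkposreal d Hd) => h Hh0 Hhd /=.
have := Hbound (x + h); rewrite (_ : x + h - x = h); last by ring.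
move=> /(_ Hhd) Hh.
rewrite (_ : (g (x + h) - g x) / h - l = (g (x + h) - g x - l * h) / h); last by field.
have Hh_pos : 0 < Rabs h by apply: Rabs_pos_lt.
rewrite Rabs_mult Rabs_inv; apply/(Rlt_div_l _ _ _ Hh_pos); nra.
Qed.

Section FTCWithin.
Variables (a b : R) (f df : R -> R).
Hypothesis ab : a <= b.
Hypothesis f_derive : forall x, a <= x <= b -> is_derive_within a b f x (df x).
Hypothesis df_cont : forall x, a <= x <= b -> continuous_within a b df x.

Definition clamp y := Rmax a (Rmin b y).

Ltac clamp_lra :=
  have := ab; rewrite /clamp /Rmax /Rmin; repeat destruct Rle_dec; try split_Rabs; lra.

Lemma clamp_in y : a <= clamp y <= b. Proof. clamp_lra. Qed.
Lemma clamp_id y : a <= y <= b -> clamp y = y. Proof. move=> ?; clamp_lra. Qed.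
Lemma clamp_lipschitz x y : Rabs (clamp y - clamp x) <= Rabs (y - x). Proof. clamp_lra. Qed.
Lemma clamp_dist x y : a <= x <= b -> Rabs (y - clamp y) <= Rabs (y - x).
Proof. move=> ?; clamp_lra. Qed.

Lemma clamp_locally_const x : ~ (a <= x <= b) ->
  exists d, 0 < d /\ forall y, Rabs (y - x) < d -> clamp y = clamp x.
Proof.
move=> Hx; have [Hxa|Hxa] := Rlt_le_dec x a.
  by exists (a - x); split=> [|y Hy]; clamp_lra.
by exists (x - b); split=> [|y Hy]; clamp_lra.
Qed.

(* Extending [f] by its tangent lines at [a] and [b] gives a function
   differentiable on all of R, with continuous derivative [ext_df]. *)
Definition ext_f y := f (clamp y) + df (clamp y) * (y - clamp y).
Definition ext_df y := df (clamp y).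

Lemma ext_f_derive x : is_derive ext_f x (ext_df x).
Proof.
apply/is_derive_Reals/derivable_pt_lim_of_bound => eps Heps.
have [Hx|Hx] : a <= x <= b \/ ~ (a <= x <= b).
  by case: (Rle_lt_dec a x) => ?; case: (Rle_lt_dec x b) => ?; [left|right..]; lra.
- have [d1 [Hd1 Hf]] := is_derive_within_bound (f_derive x Hx) (eps / 2) ltac:(lra).
  have [d2 [Hd2 Hdf]] := df_cont x Hx (eps / 2) ltac:(lra).
  exists (Rmin d1 d2); split=> [|y Hy]; first exact: Rmin_pos.
  have Hyd1 := Rlt_le_trans _ _ _ Hy (Rmin_l _ _).
  have Hyd2 := Rlt_le_trans _ _ _ Hy (Rmin_r _ _).
  have Hc := clamp_lipschitz x y; rewrite (clamp_id x Hx) in Hc.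
  have Hcd := clamp_dist x y Hx.
  have := Hf (clamp y) (clamp_in y) ltac:(lra).
  have := Hdf (clamp y) (clamp_in y) ltac:(lra).
  rewrite /ext_f /ext_df (clamp_id x Hx).
  rewrite (_ : f (clamp y) + df (clamp y) * (y - clamp y) - (f x + df x * (x - x))
               - df x * (y - x) = (f (clamp y) - f x - df x * (clamp y - x))
                                  + (df (clamp y) - df x) * (y - clamp y)); last by ring.
  have := Rabs_triang (f (clamp y) - f x - df x * (clamp y - x))
                      ((df (clamp y) - df x) * (y - clamp y)).
  rewrite Rabs_mult.
  have := Rabs_pos (df (clamp y) - df x); have := Rabs_pos (y - clamp y).
  have := Rabs_pos (clamp y - x); nra.
- have [d [Hd Hconst]] := clamp_locally_const x Hx.
  exists d; split=> // y Hy; rewrite /ext_f /ext_df (Hconst y Hy).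
  have -> u v : u + v * (y - clamp x) - (u + v * (x - clamp x)) - v * (y - x) = 0 by ring.
  by rewrite Rabs_R0; have := Rabs_pos (y - x); nra.
Qed.

Lemma ext_df_continuous x : continuous ext_df x.
Proof.
apply/filterlim_locally => eps.
have [d [Hd Hdf]] := df_cont _ (clamp_in x) eps (cond_pos eps).
exists (mkposreal d Hd) => y /ball_Rabs /= Hy.
apply/ball_Rabs/Hdf; first exact: clamp_in.
by have := clamp_lipschitz x y; lra.
Qed.

Lemma is_RInt_derive_within : is_RInt df a b (f b - f a).
Proof.
have := is_RInt_derive ext_f ext_df a b (fun x _ => ext_f_derive x)
                       (fun x _ => ext_df_continuous x).
rewrite /minus /plus /opp /= /ext_f !clamp_id; try lra.
rewrite !Rminus_eq_0 !Rmult_0_r !Rplus_0_r; apply: is_RInt_ext => x.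
by rewrite Rmin_left ?Rmax_right // => Hx; rewrite /ext_df clamp_id //; lra.
Qed.

End FTCWithin.

Section SmoothForm.
Variables (G : wmgraph) (F : E G -> nat -> R -> R).
Hypothesis F_smooth : smooth_form F.

Lemma smooth_form_is_RInt e :
  is_RInt (F e 1%nat) 0 (len e) (F e 0%nat (len e) - F e 0%nat 0).
Proof.
have [F_deriv _] := F_smooth; have len_ge0 := Rlt_le _ _ (len_pos e).
apply: is_RInt_derive_within => // x Hx.
  exact: F_deriv.
exact: is_derive_within_continuous (F_deriv e 1%nat x Hx).
Qed.

Lemma smooth_form_rev e : F (Defs.rev e) 0%nat 0 = - F e 0%nat (len e).
Proof.
have [_ [F_antisym _]] := F_smooth.
by rewrite F_antisym ?Rminus_0_r //; have := len_pos e; lra.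
Qed.

Definition outflux (v : V G) : R :=
  \big[Rplus/0]_(e | tail e == v) (INR (wt e) * F e 0%nat 0).

Lemma outflux_valency2 v : valency v = 2%nat ->
  exists e1 e2, [/\ tail e1 = v, tail e2 = v, e1 <> e2 &
    outflux v = INR (wt e1) * F e1 0%nat 0 + INR (wt e2) * F e2 0%nat 0].
Proof.
move=> val2; have : (1 < valency v)%N by rewrite val2.
move=> /card_gt1P [e1 [e2 [He1 He2 He12]]]; rewrite !inE /= in He1 He2.
exists e1, e2; split; [exact/eqP | exact/eqP | exact/eqP |].
rewrite /outflux (bigD1 e1) //= (bigD1 e2) /=; last by rewrite He2 eq_sym He12.
rewrite big_pred0 ?Rplus_0_r // => e.
move: val2; rewrite /valency (cardD1 e1) (cardD1 e2) !inE /= He1 He2 eq_sym He12.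
move=> /eqP; rewrite !eqSS => /eqP /card0_eq /(_ e); rewrite !inE /=.
by case: (tail e == v); case: (e != e1); case: (e != e2).
Qed.

Lemma outflux_interior v : ~~ bdry v -> outflux v = 0.
Proof.
have [_ [_ F_vertex]] := F_smooth.
move=> /F_vertex [val1 [val2 val3]].
case Hval: (valency v) => [|[|[|k]]].
- apply: big_pred0 => e; move/card0_eq: Hval => /(_ e).
  by rewrite !inE.
- apply: big1 => e /eqP He; have [eps [Heps F0]] := val1 Hval e He.
  by rewrite F0 ?Rmult_0_r //; have := len_pos e; lra.
- have [e1 [e2 [He1 He2 He12 ->]]] := outflux_valency2 v Hval.
  by have := val2 Hval e1 e2 He1 He2 He12 0%nat; rewrite /= !Rmult_1_r Rmult_1_l; lra.
- by rewrite /outflux -fsumR_big; apply: val3; rewrite Hval.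
Qed.

Lemma int_bdry_10_outflux :
  int_bdry_10 F = \big[Rplus/0]_(v | bdry v) outflux v.
Proof. by rewrite /int_bdry_10 fsumR_big; apply: eq_bigr => v _; rewrite fsumR_big. Qed.

Lemma sum_edges_outflux :
  \big[Rplus/0]_e (INR (wt e) * F e 0%nat 0) = \big[Rplus/0]_(v | bdry v) outflux v.
Proof.
rewrite (partition_big (@tail G) predT) // (bigID (@bdry G)) /=.
by rewrite [X in _ + X]big1 ?Rplus_0_r // => v /outflux_interior.
Qed.

Lemma sum_edges_rev (h : E G -> R) :
  \big[Rplus/0]_e h (Defs.rev e) = \big[Rplus/0]_e h e.
Proof. by rewrite [RHS](reindex_inj (can_inj (@rev_invol G))). Qed.

Lemma int_Sigma_dbar_10 : int_Sigma (dbar_10 F) = int_bdry_10 F.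
Proof.
rewrite /int_Sigma fsumR_big int_bdry_10_outflux -sum_edges_outflux.
have edge_term e : INR (wt e) * RInt (dbar_10 F e) 0 (len e) =
    INR (wt e) * F e 0%nat 0 + INR (wt (Defs.rev e)) * F (Defs.rev e) 0%nat 0.
  rewrite (is_RInt_unique _ _ _ _ (is_RInt_opp _ _ _ _ (smooth_form_is_RInt e))).
  by rewrite /opp /= smooth_form_rev wt_rev; ring.
rewrite (eq_bigr _ (fun e _ => edge_term e)) big_split /=.
by rewrite (sum_edges_rev (fun e => INR (wt e) * F e 0%nat 0)); field.
Qed.

Lemma int_Sigma_d_01 : int_Sigma (d_01 F) = - int_Sigma (dbar_10 F).
Proof.
rewrite /int_Sigma !fsumR_big Ropp_mult_distr_r -big_Ropp.
apply: Rmult_eq_compat_l; apply: eq_bigr => e _.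
rewrite (is_RInt_unique _ _ _ _ (smooth_form_is_RInt e)).
rewrite (is_RInt_unique _ _ _ _ (is_RInt_opp _ _ _ _ (smooth_form_is_RInt e))).
by rewrite /opp /=; ring.
Qed.

Lemma int_bdry_01_opp : int_bdry_01 F = - int_bdry_10 F.
Proof.
rewrite /int_bdry_01 int_bdry_10_outflux fsumR_big -big_Ropp.
apply: eq_bigr => v _; rewrite fsumR_big /outflux -big_Ropp.
rewrite (reindex_inj (can_inj (@rev_invol G))) /=.
apply: eq_big => e; first by rewrite /Defs.head rev_invol.
move=> _; rewrite wt_rev len_rev.
have := smooth_form_rev (Defs.rev e); rewrite rev_invol len_rev => ->; ring.
Qed.

End SmoothForm.

Theorem theorem2p15 (G : wmgraph) (Fw Fe : E G -> nat -> R -> R) :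
  smooth_form Fw -> smooth_form Fe ->
  int_Sigma (dbar_10 Fw) = int_bdry_10 Fw /\
  int_Sigma (d_01 Fe) = int_bdry_01 Fe.
Proof.
move=> Fw_smooth Fe_smooth; split; first exact: int_Sigma_dbar_10.
by rewrite int_Sigma_d_01 // int_bdry_01_opp // int_Sigma_dbar_10.
Qed.
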